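(* Let $d$ be an integer and let $C_1$ and $C_2$ be the curves $$C_1: y^2=x^3-d^2x,\qquad C_2: y^2=x^3+d^2x.$$ For a prime $p>2$ let $N_{p,i}$ be the number of solutions $(x,y)\in\mathbb{Z}_p\times\mathbb{Z}_p$ of the defining equation of $C_i$ taken modulo $p$, and $a_{p,i}=p-N_{p,i}$. Then $a_{p,1}+a_{p,2}=0$ for every prime $p>2$ such that $-1\in QR_p$ and $\epsilon\in QNR_p$, where $\epsilon\in\mathbb{Z}_p^*$ satisfies $\epsilon^2\equiv-1\pmod p$.
   Context: $\mathbb{Z}_p$ denotes the integers modulo $p$, $\mathbb{Z}_p^*=\{1,\dots,p-1\}$. $QR_p=\{x\in\mathbb{Z}_p^*: \exists y\in\mathbb{Z}_p^*,\ y^2\equiv x \pmod p\}$ is the set of nonzero quadratic residues modulo $p$ and $QNR_p=\mathbb{Z}_p^*\setminus QR_p$ the set of quadratic nonresidues. *)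

From mathcomp Require Import all_boot all_order all_algebra.
Set Implicit Arguments. Unset Strict Implicit. Unset Printing Implicit Defensive.
Import GRing.Theory.
Local Open Scope ring_scope.

Definition QR (p : nat) (x : 'F_p) : bool :=
  (x != 0) && [exists y : 'F_p, (y != 0) && (y ^+ 2 == x)].
Definition QNR (p : nat) (x : 'F_p) : bool := (x != 0) && ~~ QR x.

Definition Npts (p : nat) (c : int) : nat :=
  #|[set xy : 'F_p * 'F_p | xy.2 ^+ 2 == xy.1 ^+ 3 + c%:~R * xy.1]|.

Definition a_p1 (p : nat) (d : int) : int := (p%:Z - (Npts p (- d ^+ 2))%:Z)%R.
Definition a_p2 (p : nat) (d : int) : int := (p%:Z - (Npts p (d ^+ 2))%:Z)%R.

From mathcomp Require Import all_boot all_order all_fingroup all_algebra all_solvable.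
From mathcomp Require Import ring zify.
Set Implicit Arguments. Unset Strict Implicit. Unset Printing Implicit Defensive.

Import GRing.Theory.
Local Open Scope ring_scope.

(* Writing [x -> e x] with [e ^+ 2 = -1] turns [x^3 - d^2 x] into
   [-e (x^3 + d^2 x)], and [-e] is a nonsquare.  For a nonsquare [k], exactly
   one of [v] and [k v] is a nonzero square unless [v = 0], so
   [#{y | y^2 = k v} + #{y | y^2 = v} = 2] for every [v]; summing over [x]
   gives [N_1 + N_2 = 2 p]. *)

Section SquaresInFiniteField.

Variable F : finFieldType.

(* The unit group is cyclic, and nonsquares are exactly the odd powers of a
   generator. *)
Lemma nonsquare_mul_nonsquare (a b : F) : a != 0 -> b != 0 ->
  (forall y, y ^+ 2 != a) -> (forall y, y ^+ 2 != b) ->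
  exists y, y ^+ 2 = a * b.
Proof.
move=> a0 b0 na nb.
have /cyclicP [g gen_g] := field_unit_group_cyclic [set: {unit F}]%G.
have odd_exponent c : c != 0 -> (forall y, y ^+ 2 != c) ->
    exists2 i, odd i & c = FinRing.uval g ^+ i.
  move=> c0 nc; have uc : c \is a GRing.unit by rewrite unitfE.
  have : FinRing.Unit uc \in <[g]>%g by rewrite -gen_g inE.
  case/cycleP => i /(congr1 val) /= ci; exists i; last by rewrite ci FinRing.val_unitX.
  apply/negPn/negP => even_i; move: (nc (FinRing.uval g ^+ i./2)); rewrite -exprM.
  have -> : (i./2 * 2 = i)%N by rewrite muln2 -[RHS]odd_double_half (negbTE even_i).
  by rewrite ci FinRing.val_unitX eqxx.
have [i odd_i ->] := odd_exponent a a0 na.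
have [j odd_j ->] := odd_exponent b b0 nb.
exists (FinRing.uval g ^+ (i + j)./2).
rewrite -exprM -exprD; congr (_ ^+ _).
by rewrite muln2 -[RHS]odd_double_half oddD odd_i odd_j.
Qed.

Definition sqrt_count (v : F) : nat := #|[set y : F | y ^+ 2 == v]|.

Lemma sqrt_count0 : sqrt_count 0 = 1%N.
Proof.
rewrite /sqrt_count (_ : [set y | _] = [set 0]) ?cards1 //.
by apply/setP => y; rewrite !inE sqrf_eq0.
Qed.

Lemma sqrt_count_nonsquare v : (forall y, y ^+ 2 != v) -> sqrt_count v = 0%N.
Proof.
move=> nv; rewrite /sqrt_count (_ : [set y | _] = set0) ?cards0 //.
by apply/setP => y; rewrite !inE (negbTE (nv y)).
Qed.

Lemma card_sqr_graph (f : F -> F) :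
  #|[set xy : F * F | xy.2 ^+ 2 == f xy.1]| = (\sum_x sqrt_count (f x))%N.
Proof.
rewrite -sum1_card /sqrt_count.
under [RHS]eq_bigr do rewrite -sum1_card.
by rewrite pair_big_dep /=; apply: eq_bigl => -[x y]; rewrite !inE.
Qed.

Hypothesis two_neq0 : (2%:R : F) != 0.

Lemma sqrt_count_sqr s : s != 0 -> sqrt_count (s ^+ 2) = 2%N.
Proof.
move=> s0; rewrite /sqrt_count (_ : [set y | _] = [set s; -s]).
  by rewrite cards2 -addr_eq0 -mulr2n -mulr_natr mulf_neq0.
by apply/setP => y; rewrite !inE eqf_sqr.
Qed.

Lemma sqrt_count_twist (k v : F) : k != 0 -> (forall y, y ^+ 2 != k) ->
  (sqrt_count (k * v)%R + sqrt_count v = 2)%N.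
Proof.
move=> k0 nk; have [->|v0] := eqVneq v 0; first by rewrite mulr0 sqrt_count0.
have [/existsP [s /eqP sv] | nv] := boolP [exists s, s ^+ 2 == v].
  have s0 : s != 0 by apply: contraNneq v0 => s0; rewrite -sv s0 expr0n.
  rewrite -sv sqrt_count_sqr // sqrt_count_nonsquare // => y.
  apply: contra_neq (nk (y / s)) => ksy.
  by rewrite expr_div_n ksy mulfK // expf_neq0.
have {}nv y : y ^+ 2 != v by apply: contraNneq nv => yv; apply/existsP; exists y; rewrite yv.
have [t tkv] := nonsquare_mul_nonsquare k0 v0 nk nv.
have t0 : t != 0 by apply: contraNneq (mulf_neq0 k0 v0) => t0; rewrite -tkv t0 expr0n.
by rewrite -tkv sqrt_count_sqr // sqrt_count_nonsquare.
Qed.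

Lemma card_sqr_graph_twist (f g : F -> F) (e k : F) :
  e != 0 -> k != 0 -> (forall y, y ^+ 2 != k) ->
  (forall x, f (e * x) = k * g x) ->
  (#|[set xy : F * F | xy.2 ^+ 2 == f xy.1]|
     + #|[set xy : F * F | xy.2 ^+ 2 == g xy.1]| = 2 * #|F|)%N.
Proof.
move=> e0 k0 nk fe; rewrite !card_sqr_graph (reindex_inj (mulfI e0)) -big_split /=.
under eq_bigr do rewrite fe sqrt_count_twist //.
by rewrite sum_nat_const mulnC.
Qed.

End SquaresInFiniteField.

Lemma opp_nonsquare (F : fieldType) (t e : F) : t ^+ 2 = -1 ->
  (forall y, y ^+ 2 != e) -> forall y, y ^+ 2 != - e.
Proof.
move=> t2 ne y; apply: contra_neq (ne (t * y)) => y2.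
by rewrite exprMn t2 y2 mulN1r opprK.
Qed.

Lemma QNR_nonsquare (p : nat) (x : 'F_p) : QNR x -> forall y, y ^+ 2 != x.
Proof.
case/andP => x0 nQR y; apply: contraNneq nQR => y2.
rewrite /QR x0; apply/existsP; exists y; rewrite y2 eqxx andbT.
by apply: contraNneq x0 => y0; rewrite -y2 y0 expr0n.
Qed.

Lemma two_neq0_Fp (p : nat) : prime p -> (2 < p)%N -> (2%:R : 'F_p) != 0.
Proof.
move=> p_pr p_gt2; apply/eqP => /(congr1 val) /=.
by rewrite Fp_cast // (modn_small (ltnW p_gt2)) modn_small.
Qed.

Theorem lemma7 (d : int) (p : nat) :
  prime p -> (2 < p)%N ->
  QR (-1 : 'F_p) ->
  (exists eps : 'F_p, eps ^+ 2 = -1 /\ QNR eps) ->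
  a_p1 p d + a_p2 p d = 0.
Proof.
move=> p_pr p_gt2 /andP [_ /existsP [t /andP [_ /eqP t2]]] [e [e2 QNRe]].
have e0 : e != 0 by case/andP: QNRe.
have npts : (Npts p (- d ^+ 2) + Npts p (d ^+ 2) = 2 * p)%N.
  rewrite -[in RHS](card_Fp p_pr) /Npts.
  apply: (card_sqr_graph_twist (f := fun x => x ^+ 3 + (- d ^+ 2)%:~R * x)
                               (g := fun x => x ^+ 3 + (d ^+ 2)%:~R * x)
                               (two_neq0_Fp p_pr p_gt2) e0 (k := - e)).
  - by rewrite oppr_eq0.
  - exact: opp_nonsquare t2 (QNR_nonsquare QNRe).
  by move=> x; rewrite exprMn exprSr e2; ring.
rewrite /a_p1 /a_p2; lia.
Qed.
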